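(* Let $I$ be an open arc in $\partial\mathbb{D}$ and $\lambda\in I$. Let $v$ be a non-negative bounded function on $\partial\mathbb{D}$ which is continuous on $I$, continuously differentiable on $I\setminus\{\lambda\}$, and satisfies $v(\lambda)=0$. Then there exists an analytic function $b$ on $\mathbb{D}$ which extends continuously to $\overline{\mathbb{D}}$ and satisfies $b(\lambda)=0$ and $|b(e^{i\theta})|\ge v(e^{i\theta})$ for all $e^{i\theta}\in\partial\mathbb{D}$. *)

From Stdlib Require Import Reals.
Open Scope R_scope.

Definition Cpx : Type := (R * R)%type.
Definition Cadd (z w : Cpx) : Cpx := (fst z + fst w, snd z + snd w).
Definition Csub (z w : Cpx) : Cpx := (fst z - fst w, snd z - snd w).
Definition Cmul (z w : Cpx) : Cpx :=
  (fst z * fst w - snd z * snd w, fst z * snd w + snd z * fst w).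
Definition C0 : Cpx := (0, 0).
Definition Cnorm (z : Cpx) : R := sqrt (fst z * fst z + snd z * snd z).
Definition expi (t : R) : Cpx := (cos t, sin t).

Definition C_differentiable_at (f : Cpx -> Cpx) (z : Cpx) : Prop :=
  exists l : Cpx, forall eps : R, 0 < eps -> exists delta : R, 0 < delta /\
    forall h : Cpx, 0 < Cnorm h < delta ->
      Cnorm (Csub (Csub (f (Cadd z h)) (f z)) (Cmul l h)) <= eps * Cnorm h.

Definition analytic_on_disk (f : Cpx -> Cpx) : Prop :=
  forall z : Cpx, Cnorm z < 1 -> C_differentiable_at f z.

Definition continuous_on_closed_disk (f : Cpx -> Cpx) : Prop :=
  forall z : Cpx, Cnorm z <= 1 -> forall eps : R, 0 < eps ->
    exists delta : R, 0 < delta /\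
      forall w : Cpx, Cnorm w <= 1 -> Cnorm (Csub w z) < delta ->
        Cnorm (Csub (f w) (f z)) < eps.

(* Write L for the conjugate of lambda and, for e > 0,
     p_e(z) = (1 - L z) / (1 - L z + e).
   On the closed disc Re (1 - L z) >= 0, so p_e is holomorphic there, |p_e| <= 1,
   Re p_e >= 0, p_e(lambda) = 0, and Re p_e >= 1/4 wherever |1 - L z| >= e.
   Continuity of v at lambda gives radii e_k with v < M 2^-k on the arc
   |1 - L z| < e_k, and b = sum_k 8 M 2^-k p_(e_k) converges uniformly on the
   closed disc.  At a boundary point with v <= M 2^-n, either the point lies in
   the (n+1)-st arc, so v < M 2^-(n+1), or the (n+1)-st term alone gives
   Re b >= M 2^-n; iterating yields |b| >= Re b >= v. *)

From Coquelicot Require Import Coquelicot.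
From Stdlib Require Import Reals Lra Psatz ZArith ClassicalEpsilon.
Open Scope R_scope.

Lemma Cnorm_Cmod (z : Cpx) : Cnorm z = Cmod z.
Proof. unfold Cnorm, Cmod; f_equal; simpl; ring. Qed.

Lemma C_differentiable_at_intro (f : Cpx -> Cpx) (z l : Cpx) :
  (forall eps, 0 < eps -> exists delta, 0 < delta /\ forall h, 0 < Cmod h < delta ->
     Cmod (f (z + h) - f z - l * h)%C <= eps * Cmod h) ->
  C_differentiable_at f z.
Proof.
  intros Hf; exists l; intros eps Heps.
  destruct (Hf eps Heps) as [delta [Hdelta Hh]].
  exists delta; split; [exact Hdelta|]; intros h.
  rewrite !Cnorm_Cmod; exact (Hh h).
Qed.

Lemma continuous_on_closed_disk_intro (f : Cpx -> Cpx) :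
  (forall z eps, Cmod z <= 1 -> 0 < eps -> exists delta, 0 < delta /\
     forall w, Cmod w <= 1 -> Cmod (w - z)%C < delta -> Cmod (f w - f z)%C < eps) ->
  continuous_on_closed_disk f.
Proof.
  intros Hf z Hz eps Heps; rewrite Cnorm_Cmod in Hz.
  destruct (Hf z eps Hz Heps) as [delta [Hdelta Hw]].
  exists delta; split; [exact Hdelta|]; intros w.
  rewrite !Cnorm_Cmod; exact (Hw w).
Qed.

Lemma Re_le_Cmod (x : Complex.C) : Re x <= Cmod x.
Proof. pose proof (re_le_Cmod x); pose proof (Rle_abs (Re x)); lra. Qed.

Lemma Rabs_Im_le_Cmod (x : Complex.C) : Rabs (Im x) <= Cmod x.
Proof.
  unfold Cmod. rewrite <- sqrt_Rsqr_abs. apply sqrt_le_1_alt.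
  unfold Rsqr, Im. nra.
Qed.

Lemma Cmod_le_Rabs_Re_Im (x : Complex.C) : Cmod x <= Rabs (Re x) + Rabs (Im x).
Proof.
  pose proof (Rabs_pos (Re x)); pose proof (Rabs_pos (Im x)).
  assert (Hre : Rabs (Re x) * Rabs (Re x) = Re x * Re x)
    by (rewrite <- Rabs_mult; apply Rabs_right; nra).
  assert (Him : Rabs (Im x) * Rabs (Im x) = Im x * Im x)
    by (rewrite <- Rabs_mult; apply Rabs_right; nra).
  unfold Cmod. rewrite <- (sqrt_Rsqr (Rabs (Re x) + Rabs (Im x))) by lra.
  apply sqrt_le_1_alt. unfold Rsqr, Re, Im in *. nra.
Qed.

Lemma Cmod_sub_le (x y : Complex.C) : Cmod (x - y)%C <= Cmod x + Cmod y.
Proof. unfold Cminus; rewrite <- (Cmod_opp y); apply Cmod_triangle. Qed.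

Lemma Re_RtoC_mul (c : R) (z : Complex.C) : Re (c * z)%C = c * Re z.
Proof. unfold Re; simpl; ring. Qed.

Lemma Cmod_RtoC_mul (c : R) (z : Complex.C) : 0 <= c -> Cmod (c * z)%C = c * Cmod z.
Proof. intros Hc; rewrite Cmod_mult, Cmod_R, Rabs_right; lra. Qed.

Lemma Series_const_0 (a : nat -> R) : (forall k, a k = 0) -> Series a = 0.
Proof.
  intros Ha. rewrite (Series_ext a (fun k => 0 * a k)) by (intros k; rewrite Ha; ring).
  rewrite Series_scal_l; ring.
Qed.

Lemma Series_ge_term (a : nat -> R) (n : nat) :
  ex_series a -> (forall k, 0 <= a k) -> a n <= Series a.
Proof.
  intros Ha Hpos. rewrite (Series_incr_n a (S n)) by (auto; lia). simpl pred.
  assert (Htail : 0 <= Series (fun k => a (S n + k)%nat)).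
  { rewrite <- (Series_const_0 (fun _ => 0)) by reflexivity.
    apply Series_le; [intros k; split; [lra | apply Hpos]|].
    exact (proj1 (ex_series_incr_n a (S n)) Ha). }
  destruct n as [|n]; simpl in *; [lra|].
  pose proof (cond_pos_sum a n Hpos); lra.
Qed.

Lemma Series_tail_lt (b : nat -> R) (eps : R) : ex_series b -> 0 < eps ->
  exists N, (0 < N)%nat /\ Rabs (Series (fun k => b (N + k)%nat)) < eps.
Proof.
  intros Hb Heps.
  assert (Hlim : is_lim_seq (sum_n b) (Series b)) by exact (Series_correct b Hb).
  apply is_lim_seq_spec in Hlim.
  destruct (Hlim (mkposreal eps Heps)) as [N HN]; simpl in HN.
  exists (S N); split; [lia|].
  specialize (HN N (le_n N)). rewrite sum_n_Reals in HN.
  rewrite (Series_incr_n b (S N)) in HN by (auto; lia). simpl pred in HN.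
  replace (sum_f_R0 b N - (sum_f_R0 b N + Series (fun k => b (S N + k)%nat)))
    with (- Series (fun k => b (S N + k)%nat)) in HN by ring.
  rewrite Rabs_Ropp in HN; exact HN.
Qed.

Lemma ex_series_Rabs_le (a b : nat -> R) :
  (forall k, Rabs (a k) <= b k) -> ex_series b -> ex_series (fun k => Rabs (a k)).
Proof.
  intros Hab Hb; apply (ex_series_le (V := R_CompleteNormedModule) _ b); [|exact Hb].
  intros k; change (Rabs (Rabs (a k)) <= b k); rewrite Rabs_Rabsolu; apply Hab.
Qed.

Lemma Rabs_Series_le (a b : nat -> R) : (forall k, Rabs (a k) <= b k) -> ex_series b ->
  ex_series a /\ Rabs (Series a) <= Series b.
Proof.
  intros Hab Hb; pose proof (ex_series_Rabs_le a b Hab Hb) as Habs.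
  split; [apply ex_series_Rabs, Habs|].
  eapply Rle_trans; [apply Series_Rabs, Habs|].
  apply Series_le; [intros k; split; [apply Rabs_pos | apply Hab] | exact Hb].
Qed.

Lemma Rabs_Series_small (b lip : nat -> R) (eps : R) :
  ex_series b -> (forall k, 0 <= lip k) -> 0 < eps ->
  exists delta, 0 < delta /\ forall (d : R) (a : nat -> R), 0 <= d < delta ->
    (forall k, Rabs (a k) <= b k) -> (forall k, Rabs (a k) <= lip k * d) ->
    ex_series a /\ Rabs (Series a) <= eps.
Proof.
  intros Hb Hlip Heps.
  (* The first N terms are controlled by d, the tail by b. *)
  destruct (Series_tail_lt b (eps / 2) Hb ltac:(lra)) as [N [HN Htail]].
  set (S := sum_f_R0 lip (pred N)).
  assert (HS : 0 <= S) by (apply cond_pos_sum; exact Hlip).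
  exists (eps / (2 * (S + 1))); split; [apply Rdiv_lt_0_compat; lra|].
  intros d a Hd Hab Hal; pose proof (ex_series_Rabs_le a b Hab Hb) as Habs.
  split; [apply ex_series_Rabs, Habs|].
  eapply Rle_trans; [apply Series_Rabs, Habs|].
  rewrite (Series_incr_n _ N) by (auto; lia).
  assert (Hhead : sum_f_R0 (fun k => Rabs (a k)) (pred N) <= S * d).
  { unfold S; rewrite Rmult_comm, scal_sum; apply sum_Rle; intros k _; apply Hal. }
  assert (HSd : S * d <= eps / 2).
  { apply Rle_trans with (S * (eps / (2 * (S + 1)))); [apply Rmult_le_compat_l; lra|].
    apply (Rmult_le_reg_r (2 * (S + 1))); [lra|].
    replace (S * (eps / (2 * (S + 1))) * (2 * (S + 1))) with (eps * S) by (field; lra).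
    nra. }
  assert (Htail' : Series (fun k => Rabs (a (N + k)%nat)) <= eps / 2).
  { apply Rle_trans with (Series (fun k => b (N + k)%nat));
      [|pose proof (Rle_abs (Series (fun k => b (N + k)%nat))); lra].
    apply Series_le; [intros k; split; [apply Rabs_pos | apply Hab]|].
    exact (proj1 (ex_series_incr_n b N) Hb). }
  lra.
Qed.

Definition Cseries (a : nat -> Complex.C) : Complex.C :=
  (Series (fun k => Re (a k)), Series (fun k => Im (a k))).

Lemma Re_Cseries (a : nat -> Complex.C) : Re (Cseries a) = Series (fun k => Re (a k)).
Proof. reflexivity. Qed.

Lemma Im_Cseries (a : nat -> Complex.C) : Im (Cseries a) = Series (fun k => Im (a k)).
Proof. reflexivity. Qed.

Definition ex_Cseries (a : nat -> Complex.C) : Prop :=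
  ex_series (fun k => Re (a k)) /\ ex_series (fun k => Im (a k)).

Lemma ex_Cseries_le (a : nat -> Complex.C) (b : nat -> R) :
  (forall k, Cmod (a k) <= b k) -> ex_series b -> ex_Cseries a.
Proof.
  intros Hab Hb; split; apply (Rabs_Series_le _ b); auto; intros k.
  - eapply Rle_trans; [apply re_le_Cmod | apply Hab].
  - eapply Rle_trans; [apply Rabs_Im_le_Cmod | apply Hab].
Qed.

Lemma Cmod_Cseries_le (a : nat -> Complex.C) (b : nat -> R) :
  (forall k, Cmod (a k) <= b k) -> ex_series b -> Cmod (Cseries a) <= 2 * Series b.
Proof.
  intros Hab Hb.
  destruct (Rabs_Series_le (fun k => Re (a k)) b) as [_ Hre]; auto.
  { intros k; eapply Rle_trans; [apply re_le_Cmod | apply Hab]. }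
  destruct (Rabs_Series_le (fun k => Im (a k)) b) as [_ Him]; auto.
  { intros k; eapply Rle_trans; [apply Rabs_Im_le_Cmod | apply Hab]. }
  eapply Rle_trans; [apply Cmod_le_Rabs_Re_Im|].
  rewrite Re_Cseries, Im_Cseries; lra.
Qed.

Lemma ex_Cseries_minus (a b : nat -> Complex.C) :
  ex_Cseries a -> ex_Cseries b -> ex_Cseries (fun k => a k - b k)%C.
Proof.
  intros [Ha1 Ha2] [Hb1 Hb2];
    split; apply (ex_series_minus (V := R_NormedModule)); assumption.
Qed.

Lemma Cseries_minus (a b : nat -> Complex.C) : ex_Cseries a -> ex_Cseries b ->
  (Cseries a - Cseries b)%C = Cseries (fun k => a k - b k)%C.
Proof.
  intros [Ha1 Ha2] [Hb1 Hb2]; unfold Cseries.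
  apply injective_projections.
  - change (Series (fun k => Re (a k)) - Series (fun k => Re (b k))
      = Series (fun k => Re (a k - b k)%C)).
    rewrite <- Series_minus by assumption; apply Series_ext; intros k; unfold Re, Im; simpl; ring.
  - change (Series (fun k => Im (a k)) - Series (fun k => Im (b k))
      = Series (fun k => Im (a k - b k)%C)).
    rewrite <- Series_minus by assumption; apply Series_ext; intros k; unfold Re, Im; simpl; ring.
Qed.

Lemma ex_Cseries_mult_r (a : nat -> Complex.C) (h : Complex.C) :
  ex_Cseries a -> ex_Cseries (fun k => a k * h)%C.
Proof.
  intros [Ha1 Ha2]; split; simpl.
  - apply (ex_series_minus (V := R_NormedModule)); apply ex_series_scal_r; assumption.
  - apply (ex_series_plus (V := R_NormedModule)); apply ex_series_scal_r; assumption.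
Qed.

Lemma Cseries_mult_r (a : nat -> Complex.C) (h : Complex.C) :
  ex_Cseries a -> (Cseries a * h)%C = Cseries (fun k => a k * h)%C.
Proof.
  intros [Ha1 Ha2]; unfold Cseries; apply injective_projections; simpl.
  - rewrite Series_minus by (apply ex_series_scal_r; assumption).
    rewrite !Series_scal_r; reflexivity.
  - rewrite Series_plus by (apply ex_series_scal_r; assumption).
    rewrite !Series_scal_r; reflexivity.
Qed.

Lemma Cseries_const_0 (a : nat -> Complex.C) : (forall k, a k = RtoC 0) -> Cseries a = RtoC 0.
Proof.
  intros Ha; unfold Cseries; apply injective_projections; simpl;
    apply Series_const_0; intros k; rewrite Ha; reflexivity.
Qed.

Lemma Cseries_differentiable_at (g : nat -> Cpx -> Cpx) (d : nat -> Cpx) (b : nat -> R)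
    (z : Cpx) (rho K D : R) :
  ex_series b -> 0 < rho -> 0 <= K ->
  (forall k h, Cmod h < rho -> Cmod (g k (z + h)%C) <= b k) ->
  (forall k, Cmod (d k) <= D * b k) ->
  (forall k h, Cmod h < rho ->
     Cmod (g k (z + h) - g k z - d k * h)%C <= K * b k * (Cmod h * Cmod h)) ->
  C_differentiable_at (fun w => Cseries (fun k => g k w)) z.
Proof.
  intros Hb Hrho HK Hg Hd Hrem.
  assert (Hgz : forall k, Cmod (g k z) <= b k).
  { intros k; rewrite <- (Cplus_0_r z); apply Hg; rewrite Cmod_0; exact Hrho. }
  assert (Hb0 : forall k, 0 <= b k) by (intros k; eapply Rle_trans; [apply Cmod_ge_0 | apply Hgz]).
  assert (HSb : 0 <= Series b)
    by (eapply Rle_trans; [apply Hb0 | apply (Series_ge_term b 0 Hb Hb0)]).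
  assert (HexD : ex_series (fun k => D * b k)) by exact (ex_series_scal_l D b Hb).
  apply C_differentiable_at_intro with (l := Cseries d).
  intros eps Heps.
  set (C := 2 * K * Series b + 1).
  assert (HC : 0 < C) by (unfold C; nra).
  exists (Rmin rho (eps / C)); split; [apply Rmin_glb_lt; [lra | apply Rdiv_lt_0_compat; lra]|].
  intros h [Hh0 Hh].
  pose proof (Rmin_l rho (eps / C)); pose proof (Rmin_r rho (eps / C)).
  assert (Hzh : ex_Cseries (fun k => g k (z + h)%C))
    by (apply (ex_Cseries_le _ b); [intros k; apply Hg; lra | exact Hb]).
  assert (Hz : ex_Cseries (fun k => g k z)) by exact (ex_Cseries_le _ b Hgz Hb).
  assert (Hdex : ex_Cseries d) by exact (ex_Cseries_le _ _ Hd HexD).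
  rewrite Cseries_mult_r, !Cseries_minus
    by auto using ex_Cseries_minus, ex_Cseries_mult_r.
  eapply Rle_trans.
  { apply Cmod_Cseries_le with (b := fun k => K * (Cmod h * Cmod h) * b k).
    - intros k; rewrite Rmult_assoc, (Rmult_comm _ (b k)), <- Rmult_assoc; apply Hrem; lra.
    - exact (ex_series_scal_l _ b Hb). }
  rewrite Series_scal_l.
  assert (Hbound : Cmod h * C <= eps).
  { apply Rlt_le; replace eps with (eps / C * C) by (field; lra).
    apply Rmult_lt_compat_r; lra. }
  unfold C in Hbound; nra.
Qed.

Lemma Cseries_continuous_within (P : Cpx -> Prop) (g : nat -> Cpx -> Cpx) (b lip : nat -> R)
    (z : Cpx) (eps : R) :
  ex_series b -> (forall k, 0 <= lip k) ->
  (forall k w, P w -> Cmod (g k w) <= b k) ->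
  (forall k w, P w -> Cmod (g k w - g k z)%C <= lip k * Cmod (w - z)%C) ->
  P z -> 0 < eps ->
  exists delta, 0 < delta /\ forall w, P w -> Cmod (w - z)%C < delta ->
    Cmod (Cseries (fun k => g k w) - Cseries (fun k => g k z))%C < eps.
Proof.
  intros Hb Hlip Hg Hgl Hz Heps.
  assert (H2b : ex_series (fun k => 2 * b k)) by exact (ex_series_scal_l 2 b Hb).
  destruct (Rabs_Series_small (fun k => 2 * b k) lip (eps / 3) H2b Hlip ltac:(lra))
    as [delta [Hdelta Hsmall]].
  exists delta; split; [exact Hdelta|]; intros w Hw Hwz.
  assert (Hdiff : forall k, Cmod (g k w - g k z)%C <= 2 * b k).
  { intros k; eapply Rle_trans; [apply Cmod_sub_le|].
    pose proof (Hg k w Hw); pose proof (Hg k z Hz); lra. }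
  assert (Hd : 0 <= Cmod (w - z)%C < delta) by (split; [apply Cmod_ge_0 | exact Hwz]).
  destruct (Hsmall _ (fun k => Re (g k w - g k z)%C) Hd) as [_ Hre].
  { intros k; eapply Rle_trans; [apply re_le_Cmod | apply Hdiff]. }
  { intros k; eapply Rle_trans; [apply re_le_Cmod | apply Hgl, Hw]. }
  destruct (Hsmall _ (fun k => Im (g k w - g k z)%C) Hd) as [_ Him].
  { intros k; eapply Rle_trans; [apply Rabs_Im_le_Cmod | apply Hdiff]. }
  { intros k; eapply Rle_trans; [apply Rabs_Im_le_Cmod | apply Hgl, Hw]. }
  rewrite Cseries_minus by (apply (ex_Cseries_le _ b); [intros k; apply Hg |]; auto).
  eapply Rle_lt_trans; [apply Cmod_le_Rabs_Re_Im|].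
  rewrite Re_Cseries, Im_Cseries; lra.
Qed.

Lemma expi_periodic (t : R) (k : Z) : expi (t + 2 * IZR k * PI) = expi t.
Proof.
  unfold expi. destruct k as [|p|p].
  - rewrite Rmult_0_r, Rmult_0_l, Rplus_0_r; reflexivity.
  - rewrite <- (positive_nat_Z p), <- INR_IZR_INZ, cos_period, sin_period; reflexivity.
  - rewrite IZR_NEG, <- (positive_nat_Z p), <- INR_IZR_INZ.
    set (n := INR (Pos.to_nat p)).
    replace t with ((t + 2 * - n * PI) + 2 * INR (Pos.to_nat p) * PI) at 3 4
      by (unfold n; ring).
    rewrite cos_period, sin_period; reflexivity.
Qed.

Lemma exists_shift_principal (s : R) : exists k : Z, - PI <= s + 2 * IZR k * PI <= PI.
Proof.
  pose proof PI_RGT_0 as HPI.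
  destruct (archimed ((s - PI) / (2 * PI))) as [Hup1 Hup2].
  exists (- up ((s - PI) / (2 * PI)))%Z; rewrite opp_IZR.
  set (m := IZR (up ((s - PI) / (2 * PI)))) in *.
  assert (Hm1 : s - PI < 2 * PI * m).
  { replace (s - PI) with (2 * PI * ((s - PI) / (2 * PI))) by (field; lra).
    apply Rmult_lt_compat_l; lra. }
  assert (Hm2 : 2 * PI * m <= s + PI).
  { replace (s + PI) with (2 * PI * ((s - PI) / (2 * PI) + 1)) by (field; lra).
    apply Rmult_le_compat_l; lra. }
  lra.
Qed.

Lemma Rabs_lt_of_cos_lt (s d : R) :
  - PI <= s <= PI -> 0 < d <= PI -> cos d < cos s -> Rabs s < d.
Proof.
  intros Hs Hd Hcos. destruct (Rle_lt_dec 0 s) as [Hpos | Hneg].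
  - rewrite Rabs_right by lra; apply cos_decreasing_0; lra.
  - rewrite Rabs_left by lra; rewrite <- (cos_neg s) in Hcos; apply cos_decreasing_0; lra.
Qed.

Lemma periodic_lt_near (g : R -> R) (t0 eta : R) :
  (forall t k, g (t + 2 * IZR k * PI) = g t) -> continuity_pt g t0 -> g t0 < eta ->
  exists r, 0 < r /\ forall t, 2 - 2 * cos (t - t0) < r * r -> g t < eta.
Proof.
  intros Hper Hcont Heta.
  destruct (Hcont (eta - g t0) ltac:(lra)) as [delta [Hdelta Hnear]].
  pose proof PI_RGT_0 as HPI.
  set (d := Rmin delta PI).
  assert (Hd : 0 < d <= PI) by (split; [apply Rmin_glb_lt | apply Rmin_r]; lra).
  assert (Hcosd : cos d < 1) by (rewrite <- cos_0; apply cos_decreasing_1; lra).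
  exists (sqrt (2 - 2 * cos d)); split; [apply sqrt_lt_R0; lra|]; intros t Ht.
  rewrite sqrt_sqrt in Ht by lra.
  assert (Hcos : cos d < cos (t - t0)) by lra.
  destruct (exists_shift_principal (t - t0)) as [k Hk].
  set (s := t - t0 + 2 * IZR k * PI) in Hk.
  assert (Hcoss : cos s = cos (t - t0)) by exact (f_equal fst (expi_periodic (t - t0) k)).
  assert (Hs : Rabs s < d) by (apply Rabs_lt_of_cos_lt; lra).
  replace (g t) with (g (t0 + s)) by (rewrite <- (Hper t k); f_equal; unfold s; ring).
  destruct (Req_dec s 0) as [Hs0 | Hs0]; [rewrite Hs0, Rplus_0_r; exact Heta|].
  assert (Hdist : R_dist (g (t0 + s)) (g t0) < eta - g t0).
  { apply Hnear; split; [split; [exact I | lra]|].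
    change (Rabs (t0 + s - t0) < delta); replace (t0 + s - t0) with s by ring.
    assert (Hdd : d <= delta) by apply Rmin_l; lra. }
  unfold R_dist in Hdist; pose proof (Rle_abs (g (t0 + s) - g t0)); lra.
Qed.

Lemma Cmod_expi (t : R) : Cmod (expi t) = 1.
Proof.
  unfold Cmod, expi; cbn [fst snd].
  replace (cos t ^ 2 + sin t ^ 2) with 1; [apply sqrt_1|].
  pose proof (sin2_cos2 t); unfold Rsqr in *; nra.
Qed.

Lemma Cconj_expi_mul_expi (t : R) : (Cconj (expi t) * expi t)%C = RtoC 1.
Proof.
  pose proof (sin2_cos2 t); unfold Rsqr in *.
  unfold expi, Cconj; apply injective_projections; simpl; nra.
Qed.

Lemma Cmod_one_sub_conj_expi_mul_sq (t0 t : R) :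
  Cmod (1 - Cconj (expi t0) * expi t)%C * Cmod (1 - Cconj (expi t0) * expi t)%C
    = 2 - 2 * cos (t - t0).
Proof.
  unfold Cmod; rewrite sqrt_sqrt by nra.
  pose proof (sin2_cos2 t); pose proof (sin2_cos2 t0); unfold Rsqr in *.
  rewrite cos_minus; unfold expi, Cconj; simpl; nra.
Qed.

Lemma circle_lt_near (u : Cpx -> R) (t0 eta : R) :
  continuity_pt (fun s => u (expi s)) t0 -> u (expi t0) < eta ->
  exists r, 0 < r /\ forall t, Cmod (1 - Cconj (expi t0) * expi t)%C < r -> u (expi t) < eta.
Proof.
  intros Hcont Heta.
  destruct (periodic_lt_near (fun s => u (expi s)) t0 eta) as [r [Hr Hnear]];
    [intros t k; rewrite expi_periodic; reflexivity | exact Hcont | exact Heta |].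
  exists r; split; [exact Hr|]; intros t Ht; apply Hnear.
  rewrite <- Cmod_one_sub_conj_expi_mul_sq.
  pose proof (Cmod_ge_0 (1 - Cconj (expi t0) * expi t)%C); nra.
Qed.

Lemma Re_add_le_Cmod (w : Complex.C) (e : R) : Re w + e <= Cmod (w + e)%C.
Proof. eapply Rle_trans; [|apply Re_le_Cmod]; unfold Re; simpl; lra. Qed.

Section HalfPlane.

Variable e : R.
Hypothesis He : 0 < e.

Lemma add_pos_neq_0 (w : Complex.C) : 0 <= Re w -> (w + e)%C <> 0%C.
Proof. intros Hw E; apply (f_equal Re) in E; unfold Re in *; simpl in E; lra. Qed.

Lemma Cmod_div_add_pos_le_1 (w : Complex.C) : 0 <= Re w -> Cmod (w / (w + e))%C <= 1.
Proof.
  intros Hw. rewrite Cmod_div by (apply add_pos_neq_0, Hw).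
  pose proof (Re_add_le_Cmod w e).
  assert (Hle : Cmod w <= Cmod (w + e)%C).
  { unfold Cmod; apply sqrt_le_1_alt; unfold Re in Hw; simpl; nra. }
  apply (Rmult_le_reg_r (Cmod (w + e)%C)); [lra|].
  unfold Rdiv; rewrite Rmult_assoc, Rinv_l; lra.
Qed.

Lemma Re_div_add_pos (a b : R) : 0 <= a ->
  Re ((a, b) / ((a, b) + e))%C = (a * (a + e) + b * b) / ((a + e) * (a + e) + b * b).
Proof.
  intros Ha. unfold Cdiv, Cinv, Cmult, Cplus, Re; simpl. field. nra.
Qed.

Lemma Re_div_add_pos_ge_0 (w : Complex.C) : 0 <= Re w -> 0 <= Re (w / (w + e))%C.
Proof.
  destruct w as [a b]; intros Ha.
  rewrite Re_div_add_pos by exact Ha; unfold Re in Ha; simpl in Ha.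
  apply Rdiv_le_0_compat; nra.
Qed.

Lemma Re_div_add_pos_ge_quarter (w : Complex.C) :
  0 <= Re w -> e <= Cmod w -> / 4 <= Re (w / (w + e))%C.
Proof.
  intros Ha Hew. pose proof (Cmod_ge_0 w).
  assert (Hsq : e * e <= Re w * Re w + Im w * Im w).
  { replace (Re w * Re w + Im w * Im w) with (Cmod w * Cmod w); [nra|].
    unfold Cmod, Re, Im; rewrite sqrt_sqrt; [ring | nra]. }
  destruct w as [a b]; rewrite Re_div_add_pos by exact Ha.
  unfold Re, Im in *; simpl in *.
  apply (Rmult_le_reg_r ((a + e) * (a + e) + b * b)); [nra|].
  unfold Rdiv; rewrite Rmult_assoc, Rinv_l by nra; nra.
Qed.

End HalfPlane.

Lemma div_sq_le_inv (e r a : R) : 0 < r -> 0 < e -> r + e <= a -> e / (a * a) <= / r.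
Proof.
  intros Hr He Ha. assert (Ha0 : 0 < a) by lra.
  apply (Rmult_le_reg_r (r * (a * a))); [apply Rmult_lt_0_compat; nra|].
  replace (e / (a * a) * (r * (a * a))) with (e * r) by (field; lra).
  replace (/ r * (r * (a * a))) with (a * a) by (field; lra). nra.
Qed.

Definition peak (L : Cpx) (e : R) (z : Cpx) : Cpx := ((1 - L * z) / (1 - L * z + e))%C.

Definition peak_deriv (L : Cpx) (e : R) (z : Cpx) : Cpx :=
  (- (e * L) / ((1 - L * z + e) * (1 - L * z + e)))%C.

Section Peak.

Variables (L : Cpx) (e : R).
Hypotheses (HL : Cmod L = 1) (He : 0 < e).

Lemma Re_one_sub_mul_ge (z : Cpx) : 1 - Cmod z <= Re (1 - L * z)%C.
Proof.
  pose proof (Re_le_Cmod (L * z)%C) as Hlz; rewrite Cmod_mult, HL in Hlz.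
  unfold Re in *; simpl in *; lra.
Qed.

Lemma Cmod_peak_denom_ge (z : Cpx) : 1 - Cmod z + e <= Cmod (1 - L * z + e)%C.
Proof.
  pose proof (Re_one_sub_mul_ge z); pose proof (Re_add_le_Cmod (1 - L * z)%C e); lra.
Qed.

Lemma peak_denom_neq_0 (z : Cpx) : Cmod z <= 1 -> (1 - L * z + e)%C <> 0%C.
Proof. intros Hz; apply add_pos_neq_0; [exact He|]; pose proof (Re_one_sub_mul_ge z); lra. Qed.

Lemma Cmod_peak_le_1 (z : Cpx) : Cmod z <= 1 -> Cmod (peak L e z) <= 1.
Proof.
  intros Hz; apply Cmod_div_add_pos_le_1; [exact He|]; pose proof (Re_one_sub_mul_ge z); lra.
Qed.

Lemma Re_peak_ge_0 (z : Cpx) : Cmod z <= 1 -> 0 <= Re (peak L e z).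
Proof.
  intros Hz; apply Re_div_add_pos_ge_0; [exact He|]; pose proof (Re_one_sub_mul_ge z); lra.
Qed.

Lemma Re_peak_ge_quarter (z : Cpx) :
  Cmod z <= 1 -> e <= Cmod (1 - L * z)%C -> / 4 <= Re (peak L e z).
Proof.
  intros Hz; apply Re_div_add_pos_ge_quarter; [exact He|]; pose proof (Re_one_sub_mul_ge z); lra.
Qed.

Lemma peak_eq_0 (z : Cpx) : (L * z)%C = RtoC 1 -> peak L e z = RtoC 0.
Proof.
  intros Hz; unfold peak; rewrite Hz; unfold Cdiv; replace (RtoC 1 - RtoC 1)%C with (RtoC 0)
    by (apply injective_projections; simpl; ring); apply Cmult_0_l.
Qed.

Lemma Cmod_peak_sub_le (w z : Cpx) : Cmod w <= 1 -> Cmod z <= 1 ->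
  Cmod (peak L e w - peak L e z)%C <= / e * Cmod (w - z)%C.
Proof.
  intros Hw Hz.
  pose proof (peak_denom_neq_0 w Hw) as Hw0; pose proof (peak_denom_neq_0 z Hz) as Hz0.
  replace (peak L e w - peak L e z)%C
    with (- (e * L * (w - z)) / ((1 - L * w + e) * (1 - L * z + e)))%C
    by (unfold peak; field; auto).
  rewrite Cmod_div, Cmod_opp, !Cmod_mult, HL, Cmod_R, Rabs_right by (auto using Cmult_neq_0; lra).
  set (Aw := Cmod (1 - L * w + e)%C); set (Az := Cmod (1 - L * z + e)%C).
  assert (HAw : e <= Aw) by (pose proof (Cmod_peak_denom_ge w); unfold Aw; lra).
  assert (HAz : e <= Az) by (pose proof (Cmod_peak_denom_ge z); unfold Az; lra).
  pose proof (Cmod_ge_0 (w - z)%C).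
  assert (Hee : e * e <= Aw * Az) by (apply Rmult_le_compat; lra).
  apply (Rmult_le_reg_r (e * (Aw * Az))); [apply Rmult_lt_0_compat; nra|].
  replace (e * 1 * Cmod (w - z)%C / (Aw * Az) * (e * (Aw * Az))) with (e * e * Cmod (w - z)%C)
    by (field; split; lra).
  replace (/ e * Cmod (w - z)%C * (e * (Aw * Az))) with (Cmod (w - z)%C * (Aw * Az))
    by (field; lra).
  nra.
Qed.

Lemma Cmod_peak_deriv_le (z : Cpx) : Cmod z < 1 -> Cmod (peak_deriv L e z) <= / (1 - Cmod z).
Proof.
  intros Hz. pose proof (peak_denom_neq_0 z ltac:(lra)).
  unfold peak_deriv.
  rewrite Cmod_div, Cmod_opp, !Cmod_mult, HL, Cmod_R, Rabs_right, Rmult_1_r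
    by (auto using Cmult_neq_0; lra).
  apply div_sq_le_inv; [lra | exact He | apply Cmod_peak_denom_ge].
Qed.

Lemma Cmod_peak_remainder_le (z h : Cpx) : Cmod z < 1 -> Cmod h < (1 - Cmod z) / 2 ->
  Cmod (peak L e (z + h) - peak L e z - peak_deriv L e z * h)%C
    <= 2 / ((1 - Cmod z) * (1 - Cmod z)) * (Cmod h * Cmod h).
Proof.
  intros Hz Hh. pose proof (Cmod_ge_0 h). pose proof (Cmod_triangle z h).
  pose proof (peak_denom_neq_0 z ltac:(lra)) as Hz0.
  pose proof (peak_denom_neq_0 (z + h)%C ltac:(lra)) as Hzh0.
  replace (peak L e (z + h) - peak L e z - peak_deriv L e z * h)%C
    with (- (e * L * L * h * h) / ((1 - L * z + e) * (1 - L * z + e) * (1 - L * (z + h) + e)))%C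
    by (unfold peak, peak_deriv; field; auto).
  rewrite Cmod_div, Cmod_opp, !Cmod_mult, HL, Cmod_R, Rabs_right
    by (auto using Cmult_neq_0; lra).
  set (r := 1 - Cmod z); set (Az := Cmod (1 - L * z + e)%C).
  set (Azh := Cmod (1 - L * (z + h) + e)%C).
  assert (HAz : e / (Az * Az) <= / r)
    by (apply div_sq_le_inv; [unfold r; lra | exact He | apply Cmod_peak_denom_ge]).
  assert (HAzh : r / 2 <= Azh)
    by (pose proof (Cmod_peak_denom_ge (z + h)%C); unfold Azh, r in *; lra).
  assert (Hr : 0 < r) by (unfold r; lra).
  assert (HAz0 : 0 < Az) by (pose proof (Cmod_peak_denom_ge z); unfold Az, r in *; lra).
  replace (e * 1 * 1 * Cmod h * Cmod h / (Az * Az * Azh))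
    with (e / (Az * Az) * (Cmod h * Cmod h / Azh)) by (field; lra).
  replace (2 / (r * r) * (Cmod h * Cmod h)) with (/ r * (Cmod h * Cmod h / (r / 2)))
    by (field; lra).
  apply Rmult_le_compat; [apply Rdiv_le_0_compat; nra | apply Rdiv_le_0_compat; nra | exact HAz |].
  apply Rmult_le_compat_l; [nra|]; apply Rinv_le_contravar; lra.
Qed.

End Peak.

Lemma le_of_halving (x y M : R) : x <= M -> 0 <= y ->
  (forall n, x <= M * (/ 2) ^ n -> x <= M * (/ 2) ^ S n \/ x <= y) -> x <= y.
Proof.
  intros HxM Hy Hstep.
  assert (Hall : forall n, x <= M * (/ 2) ^ n \/ x <= y).
  { induction n as [|n [IH | IH]]; [left; simpl; lra | apply Hstep, IH | right; exact IH]. }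
  destruct (Rle_lt_dec x y) as [Hxy | Hxy]; [exact Hxy | exfalso].
  assert (HM : 0 < M) by lra.
  destruct (pow_lt_1_zero (/ 2) ltac:(rewrite Rabs_right; lra) (x / M)) as [N HN];
    [apply Rdiv_lt_0_compat; lra|].
  specialize (HN N (le_n N)); rewrite Rabs_right in HN by (apply Rle_ge, pow_le; lra).
  assert (HMN : M * (/ 2) ^ N < x).
  { apply (Rmult_lt_compat_l M) in HN; [|exact HM].
    replace (M * (x / M)) with x in HN by (field; lra); exact HN. }
  destruct (Hall N); lra.
Qed.

Definition peak_series (L : Cpx) (c e : nat -> R) (z : Cpx) : Cpx :=
  Cseries (fun k => c k * peak L (e k) z)%C.

Section PeakSeries.

Variables (L : Cpx) (c e : nat -> R).
Hypotheses (HL : Cmod L = 1) (He : forall k, 0 < e k)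
  (Hc : ex_series c) (Hc0 : forall k, 0 <= c k).

Lemma Cmod_peak_term_le (k : nat) (z : Cpx) :
  Cmod z <= 1 -> Cmod (c k * peak L (e k) z)%C <= c k.
Proof.
  intros Hz; rewrite Cmod_RtoC_mul by apply Hc0.
  pose proof (Cmod_peak_le_1 L (e k) HL (He k) z Hz); pose proof (Hc0 k); nra.
Qed.

Lemma peak_series_analytic : analytic_on_disk (peak_series L c e).
Proof.
  intros z Hz; rewrite Cnorm_Cmod in Hz.
  set (r := 1 - Cmod z); assert (Hr : 0 < r) by (unfold r; lra).
  apply (Cseries_differentiable_at _ (fun k => c k * peak_deriv L (e k) z)%C c z
           (r / 2) (2 / (r * r)) (/ r)).
  - exact Hc.
  - lra.
  - apply Rlt_le, Rdiv_lt_0_compat; nra.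
  - intros k h Hh; apply Cmod_peak_term_le.
    pose proof (Cmod_triangle z h); unfold r in Hh; lra.
  - intros k; rewrite Cmod_RtoC_mul, Rmult_comm by apply Hc0.
    apply Rmult_le_compat_r; [apply Hc0|].
    apply Cmod_peak_deriv_le; [exact HL | apply He | exact Hz].
  - intros k h Hh.
    replace (c k * peak L (e k) (z + h) - c k * peak L (e k) z
             - c k * peak_deriv L (e k) z * h)%C
      with (c k * (peak L (e k) (z + h) - peak L (e k) z - peak_deriv L (e k) z * h))%C
      by ring.
    rewrite Cmod_RtoC_mul by apply Hc0.
    replace (2 / (r * r) * c k * (Cmod h * Cmod h))
      with (c k * (2 / (r * r) * (Cmod h * Cmod h))) by ring.
    apply Rmult_le_compat_l; [apply Hc0|].
    apply Cmod_peak_remainder_le; [exact HL | apply He | exact Hz | exact Hh].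
Qed.

Lemma peak_series_continuous : continuous_on_closed_disk (peak_series L c e).
Proof.
  apply continuous_on_closed_disk_intro; intros z eps Hz Heps.
  unfold peak_series.
  apply (Cseries_continuous_within (fun w => Cmod w <= 1)
           (fun k w => c k * peak L (e k) w)%C c (fun k => c k / e k));
    [exact Hc | | exact Cmod_peak_term_le | | exact Hz | exact Heps].
  - intros k; apply Rdiv_le_0_compat; [apply Hc0 | apply He].
  - intros k w Hw.
    replace (c k * peak L (e k) w - c k * peak L (e k) z)%C
      with (c k * (peak L (e k) w - peak L (e k) z))%C by ring.
    rewrite Cmod_RtoC_mul by apply Hc0.
    unfold Rdiv; rewrite Rmult_assoc; apply Rmult_le_compat_l; [apply Hc0|].
    apply Cmod_peak_sub_le; [exact HL | apply He | exact Hw | exact Hz].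
Qed.

Lemma peak_series_eq_0 (z : Cpx) : (L * z)%C = RtoC 1 -> peak_series L c e z = RtoC 0.
Proof.
  intros Hz; apply Cseries_const_0; intros k.
  rewrite peak_eq_0 by exact Hz; apply Cmult_0_r.
Qed.

Lemma Re_peak_series_ge_term (k : nat) (z : Cpx) :
  Cmod z <= 1 -> c k * Re (peak L (e k) z) <= Re (peak_series L c e z).
Proof.
  intros Hz; unfold peak_series; rewrite Re_Cseries, <- Re_RtoC_mul.
  apply (Series_ge_term (fun j => Re (c j * peak L (e j) z)%C)).
  - apply (ex_Cseries_le _ c); [intros j; apply Cmod_peak_term_le, Hz | exact Hc].
  - intros j; rewrite Re_RtoC_mul.
    apply Rmult_le_pos; [apply Hc0 | apply Re_peak_ge_0; [exact HL | apply He | exact Hz]].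
Qed.

Lemma Re_peak_series_ge (M x : R) (z : Cpx) : Cmod z <= 1 ->
  (forall k, c k = 8 * M * (/ 2) ^ k) -> x <= M ->
  (forall k, Cmod (1 - L * z)%C < e k -> x < M * (/ 2) ^ k) ->
  x <= Re (peak_series L c e z).
Proof.
  intros Hz Hc_geom HxM Hlevels.
  apply (le_of_halving _ _ M HxM).
  - eapply Rle_trans; [|apply (Re_peak_series_ge_term O z Hz)].
    apply Rmult_le_pos; [apply Hc0 | apply Re_peak_ge_0; [exact HL | apply He | exact Hz]].
  - intros n Hn.
    destruct (Rlt_le_dec (Cmod (1 - L * z)%C) (e (S n))) as [Hnear | Hfar];
      [left; left; exact (Hlevels (S n) Hnear) | right].
    eapply Rle_trans; [|apply (Re_peak_series_ge_term (S n) z Hz)].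
    replace x with (x * 1) by ring.
    (* The factor 8 pays for the quarter and for the shift from n to S n. *)
    apply Rle_trans with (c (S n) * / 4).
    + replace (c (S n) * / 4) with (M * (/ 2) ^ n) by (rewrite Hc_geom; simpl; field).
      lra.
    + apply Rmult_le_compat_l; [apply Hc0|].
      apply Re_peak_ge_quarter; [exact HL | apply He | exact Hz | exact Hfar].
Qed.

End PeakSeries.

Theorem mainTheorem14 (a b t0 : R) (v : Cpx -> R)
  (Hab : a < b) (Hlen : b <= a + 2 * PI) (Ht0 : a < t0 < b)
  (Hnonneg : forall t : R, 0 <= v (expi t))
  (Hbdd : exists M : R, forall t : R, v (expi t) <= M)
  (Hcont : forall t : R, a < t < b -> continuity_pt (fun s => v (expi s)) t)
  (HC1 : exists v' : R -> R, forall t : R, a < t < b -> t <> t0 ->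
      derivable_pt_lim (fun s => v (expi s)) t (v' t) /\ continuity_pt v' t)
  (Hzero : v (expi t0) = 0) :
  exists f : Cpx -> Cpx,
    analytic_on_disk f /\ continuous_on_closed_disk f /\
    f (expi t0) = C0 /\
    forall t : R, Cnorm (f (expi t)) >= v (expi t).
Proof.
  destruct Hbdd as [M HM].
  set (M1 := Rabs M + 1).
  assert (HM1 : 0 < M1) by (pose proof (Rabs_pos M); unfold M1; lra).
  assert (HvM1 : forall t, v (expi t) <= M1)
    by (intros t; pose proof (HM t); pose proof (Rle_abs M); unfold M1; lra).
  set (L := Cconj (expi t0)).
  assert (Hlevels : forall k : nat, exists r, 0 < r /\
            forall t, Cmod (1 - L * expi t)%C < r -> v (expi t) < M1 * (/ 2) ^ k).
  { intros k; apply circle_lt_near; [apply Hcont, Ht0|].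
    rewrite Hzero; apply Rmult_lt_0_compat; [exact HM1 | apply pow_lt; lra]. }
  destruct (choice _ Hlevels) as [e He].
  set (c := fun k => 8 * M1 * (/ 2) ^ k).
  assert (Hc : ex_series c)
    by exact (ex_series_scal_l _ _ (ex_series_geom (/ 2) ltac:(rewrite Rabs_right; lra))).
  assert (Hc0 : forall k, 0 <= c k) by (intros k; apply Rmult_le_pos; [lra | apply pow_le; lra]).
  assert (HL : Cmod L = 1) by (unfold L; rewrite Cmod_conj; apply Cmod_expi).
  assert (He0 : forall k, 0 < e k) by (intros k; apply He).
  exists (peak_series L c e); split; [|split; [|split]].
  - exact (peak_series_analytic L c e HL He0 Hc Hc0).
  - exact (peak_series_continuous L c e HL He0 Hc Hc0).
  - exact (peak_series_eq_0 L c e (expi t0) (Cconj_expi_mul_expi t0)).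
  - intros t; rewrite Cnorm_Cmod; apply Rle_ge.
    eapply Rle_trans; [|apply Re_le_Cmod].
    apply (Re_peak_series_ge L c e HL He0 Hc Hc0 M1);
      [rewrite Cmod_expi; lra | reflexivity | apply HvM1 | intros k; apply He].
Qed.
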